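(* Let $A$ be a commutative ring with $1$, let $T\subset A$ be an archimedean semiring containing $\frac1n$ for some integer $n>1$, and let $f\in A$. Assume that for every maximal ideal $\mathfrak m$ of $A$ there exists $s\in A\setminus\mathfrak m$ such that $s\ge0$ on $X_A(T)$ and $sf\in T$. Then $f\in T$.
   Context: A semiring $T\subset A$ is a subset containing $0$ and $1$ and closed under addition and multiplication; it is archimedean if for every $f\in A$ there is $n\in\mathbb{Z}$ with $n+f\in T$. The real spectrum $\mathrm{Sper}(A)$ is the set of pairs $\alpha=(\mathfrak p,\le)$ with $\mathfrak p$ a prime ideal of $A$ and $\le$ an ordering of the residue field of $\mathfrak p$; for $a\in A$, $a\ge_\alpha0$ means the image of $a$ in that residue field is $\ge0$ under $\le$ (similarly $>_\alpha$). $X_A(T)=\{\alpha\in\mathrm{Sper}(A): a\ge_\alpha0 \text{ for all } a\in T\}$. An element $s\in A$ satisfies $s\ge0$ on $X_A(T)$ if $s\ge_\alpha0$ for all $\alpha\in X_A(T)$. *)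

From HB Require Import structures.
From mathcomp Require Import all_boot all_order all_algebra.
From mathcomp Require Import generic_quotient ring_quotient fraction.
From Stdlib Require Import ClassicalEpsilon.
Set Implicit Arguments. Unset Strict Implicit. Unset Printing Implicit Defensive.
Import Order.TTheory GRing.Theory Num.Theory.
Local Open Scope ring_scope.

(* A/p is given MathComp's quotient ring {ideal_quot p}; we equip it  *)
(* (classically) with its unit structure, so that it is an idomainType *)
(* and its fraction field {fraction _} is available.                  *)
Section ResidueField.
Variables (R : comNzRingType) (p : prime_idealr R).

Definition quotp : Type := {ideal_quot p}.
HB.instance Definition _ := GRing.ComNzRing.on quotp.

Definition quotp_unit : {pred quotp} :=
  fun x => if excluded_middle_informative (exists y : quotp, y * x = 1)
           then true else false.

Definition quotp_inv (x : quotp) : quotp :=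
  match excluded_middle_informative (exists y : quotp, y * x = 1) with
  | left H => proj1_sig (constructive_indefinite_description _ H)
  | right _ => x
  end.

Lemma quotp_mulVx : {in quotp_unit, left_inverse 1 quotp_inv *%R}.
Proof.
move=> x; rewrite unfold_in /quotp_unit /quotp_inv.
case: excluded_middle_informative => // H _.
by case: constructive_indefinite_description.
Qed.

Lemma quotp_unitPl : forall x y : quotp, y * x = 1 -> quotp_unit x.
Proof.
move=> x y yx; rewrite /quotp_unit.
by case: excluded_middle_informative => // -[]; exists y.
Qed.

Lemma quotp_invr_out : {in [predC quotp_unit], quotp_inv =1 id}.
Proof.
move=> x; rewrite inE /= unfold_in /quotp_unit /quotp_inv.
by case: excluded_middle_informative.
Qed.

HB.instance Definition _ := GRing.ComNzRing_hasMulInverse.Build quotp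
  quotp_mulVx quotp_unitPl quotp_invr_out.

Lemma quotp_integral : GRing.integral_domain_axiom quotp.
Proof. exact: Quotient.rquot_IdomainAxiom. Qed.

HB.instance Definition _ := GRing.ComUnitRing_isIntegral.Build quotp
  quotp_integral.

Definition residue_field : fieldType := {fraction quotp}.

Definition residue (a : R) : residue_field :=
  tofrac ((\pi_(quotp) a)%qT : quotp).

End ResidueField.

Definition field_ordering (K : fieldType) (le : rel K) : Prop :=
  [/\ reflexive le, antisymmetric le, transitive le & total le] /\
  (forall x y z, le x y -> le (x + z) (y + z)) /\
  (forall x y, le 0 x -> le 0 y -> le 0 (x * y)).

Record sper (A : comNzRingType) := Sper {
  sper_prime : prime_idealr A;
  sper_le : rel (residue_field sper_prime);
  sper_ordering : field_ordering sper_le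
}.

Definition sper_ge0 (A : comNzRingType) (alpha : sper A) (a : A) : Prop :=
  @sper_le A alpha 0 (residue (sper_prime alpha) a).

Definition in_XA (A : comNzRingType) (T : {pred A}) (alpha : sper A) : Prop :=
  forall a, a \in T -> sper_ge0 alpha a.

Definition nonneg_on_XA (A : comNzRingType) (T : {pred A}) (s : A) : Prop :=
  forall alpha : sper A, in_XA T alpha -> sper_ge0 alpha s.

Definition is_semiring (A : comNzRingType) (T : {pred A}) : Prop :=
  semiring_closed T.

Definition archimedean_semiring (A : comNzRingType) (T : {pred A}) : Prop :=
  forall f : A, exists n : int, n%:~R + f \in T.

Definition maximal_ideal (A : comNzRingType) (m : {pred A}) : Prop :=
  idealr_closed m /\
  forall J : {pred A}, idealr_closed J -> {subset m <= J} -> J =i m.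

(* The [s] attached to the maximal ideals generate the unit ideal (Krull), so
   [\sum_i a_i s_i = 1] for finitely many such [s_i].  Write [u = 1/n] and let [Tbar] be the set
   of [x] with [x + u^e \in T] for every [e]; it is a preordering, squares lying in it by the
   variance identity for Bernstein polynomials.  Every preordering avoiding [-1] is contained in
   a prime cone, i.e. a point of [Sper A]; as all [s_i] are [>= 0] on [X_A(T)] and cannot all
   vanish at a point, this forces [g = \sum_i s_i >= u^e] in [Tbar] for some [e].  With
   [y = 1 - c g], which lies between [0] and [1 - u^m] for a suitable [c = u^k], the truncated
   geometric series [t_i = c \sum_(k <= K) y^k + a_i y^(K+1)] lie in [T] for [K] large and
   satisfy [\sum_i t_i s_i = 1]; hence [f = \sum_i t_i (s_i f) \in T]. *)

From HB Require Import structures.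
From mathcomp Require Import all_boot all_order all_algebra.
From mathcomp Require Import generic_quotient ring_quotient fraction.
From mathcomp Require Import ring zify.
From mathcomp Require Import boolp classical_sets.
From Stdlib Require Import Classical.
Import Order.TTheory GRing.Theory Num.Theory.
Set Implicit Arguments. Unset Strict Implicit. Unset Printing Implicit Defensive.
Local Open Scope ring_scope.

Lemma tofrac_div_surj (R : idomainType) (x : {fraction R}) :
  exists a b : R, b != 0 /\ x = tofrac a / tofrac b.
Proof.
rewrite -[x]reprK; case: (repr x) => [[a b] /= b_neq0].
exists a, b; split => //.
have bF_neq0 : tofrac b != 0 by rewrite tofrac_eq0.
apply: (mulfI bF_neq0); rewrite mulrCA divff // mulr1.
rewrite {1}/tofrac -lock.
etransitivity; first exact: (esym (FracField.pi_mul (Ratio b 1) (@mkRatio _ (a, b) b_neq0))).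
rewrite /tofrac -lock; apply/eqmodP; rewrite /= FracField.equivfE /FracField.mulf /=.
by rewrite !numden_Ratio ?oner_neq0 ?mulf_neq0 ?oner_neq0 //= mul1r mulr1 mulrC.
Qed.

Section Residue.
Variables (A : comNzRingType) (p : prime_idealr A).
Local Notation res := (residue p).

HB.instance Definition _ := GRing.RMorphism.copy res
  (@tofrac (quotp p) \o (\pi%qT : A -> quotp p)).

Lemma residue_eq0 a : (res a == 0) = (a \in p).
Proof.
rewrite /residue tofrac_eq0.
by have := Quotient.idealrBE (p : zmodClosed A) a 0; rewrite subr0 rmorph0 => ->.
Qed.

Lemma prime_idealr_notinM b d : b \notin p -> d \notin p -> b * d \notin p.
Proof. by rewrite prime_idealrM => /negPf -> /negPf ->. Qed.

Lemma residue_div_surj (z : residue_field p) :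
  exists a b, b \notin p /\ z = res a / res b.
Proof.
have [x [y [y_neq0 ->]]] := tofrac_div_surj z.
exists (repr x), (repr y); split; last by rewrite /residue !reprK.
by rewrite -residue_eq0 /residue reprK tofrac_eq0.
Qed.

End Residue.

(* The positivity set of a point of Sper A; its support is the prime ideal of that point. *)
Record prime_cone (A : comNzRingType) := PrimeCone {
  cone :> A -> Prop;
  coneD : forall x y, cone x -> cone y -> cone (x + y);
  coneM : forall x y, cone x -> cone y -> cone (x * y);
  cone_total : forall x, cone x \/ cone (- x);
  cone_N1 : ~ cone (-1);
  cone_prime : forall x y, cone (x * y) -> cone (- (x * y)) ->
    (cone x /\ cone (- x)) \/ (cone y /\ cone (- y)) }.

Section PrimeCone.
Variables (A : comNzRingType) (C : prime_cone A).

Lemma cone_sqr x : C (x * x).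
Proof. by case: (cone_total C x) => Cx; [|rewrite -mulrNN]; apply: coneM. Qed.

Lemma cone0 : C 0. Proof. by case: (cone_total C 0) => //; rewrite oppr0. Qed.

Definition cone_supp : {pred A} := fun a => `[< C a /\ C (- a) >].

Lemma cone_suppP a : reflect (C a /\ C (- a)) (a \in cone_supp).
Proof. exact: asboolP. Qed.

Lemma cone_suppM a x : x \in cone_supp -> a * x \in cone_supp.
Proof.
move=> /cone_suppP[Cx CNx]; apply/cone_suppP.
case: (cone_total C a) => Ca; first by rewrite -mulrN; split; apply: coneM.
by split; [rewrite -mulrNN|rewrite -mulNr]; apply: coneM.
Qed.

Lemma cone_supp_idealr : idealr_closed cone_supp.
Proof.
split; first by apply/cone_suppP; rewrite oppr0; split; apply: cone0.
  by apply/negP => /cone_suppP[_]; apply: cone_N1.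
move=> a x y /(cone_suppM a)/cone_suppP[C1 C2] /cone_suppP[C3 C4].
by apply/cone_suppP; rewrite opprD; split; apply: coneD.
Qed.

HB.instance Definition _ := isIdealr.Build A cone_supp cone_supp_idealr.

Lemma cone_supp_prime : prime_idealr_closed cone_supp.
Proof.
move=> x y /cone_suppP[Cxy CNxy].
by case: (cone_prime Cxy CNxy) => supp_xy; apply/orP; [left|right]; apply/cone_suppP.
Qed.

HB.instance Definition _ := isPrimeIdealrClosed.Build A cone_supp cone_supp_prime.

Definition cone_prime_ideal : prime_idealr A := cone_supp.

Lemma cone_sum (I : Type) (r : seq I) (P : pred I) (F : I -> A) :
  (forall i, P i -> C (F i)) -> C (\sum_(i <- r | P i) F i).
Proof. by move=> CF; apply: (big_ind C) => //; [exact: cone0|exact: coneD]. Qed.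

Lemma cone_sum_supp (I : eqType) (r : seq I) (F : I -> A) :
    {in r, forall i, C (F i)} -> C (- \sum_(i <- r) F i) ->
  {in r, forall i, F i \in cone_supp}.
Proof.
elim: r => [|j r IHr] // Cr CNsum i; rewrite big_cons in CNsum.
have Cr' : {in r, forall k, C (F k)} by move=> k kr; apply: Cr; rewrite inE kr orbT.
have Cj : C (F j) by apply: Cr; rewrite mem_head.
rewrite inE => /orP[/eqP ->|ir].
  apply/cone_suppP; split => //.
  have Csum : C (\sum_(k <- r) F k) by rewrite big_seq; apply: cone_sum.
  by have := coneD CNsum Csum; rewrite opprD subrK.
apply: (IHr Cr' _ i ir).
by have := coneD CNsum Cj; rewrite opprD addrAC addNr add0r.
Qed.

Local Notation p := cone_prime_ideal.
Local Notation res := (residue p).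

(* [a / b >= 0] iff [a b = (a / b) b^2 >= 0] *)
Definition cone_pos (z : residue_field p) : Prop :=
  exists a b : A, [/\ b \notin p, z = res a / res b & C (a * b)].

Lemma cone_mul_residue_div a b c d : b \notin p -> d \notin p ->
  res a / res b = res c / res d -> C (a * b) -> C (c * d).
Proof.
move=> bp dp abcd Cab.
have [rb rd] : res b != 0 /\ res d != 0 by rewrite !residue_eq0.
have : (a * d - c * b) * (b * d) \in cone_supp.
  rewrite -[_ \in _]/(_ \in p) prime_idealrM -residue_eq0 rmorphB !rmorphM /=.
  rewrite (_ : res a = res c / res d * res b); first by rewrite mulrAC divfK // mulrC subrr eqxx.
  by rewrite -abcd divfK.
move=> /cone_suppP[Cs CNs].
have Ccdbb : C (c * d * (b * b)).
  have -> : c * d * (b * b) = a * b * (d * d) + - ((a * d - c * b) * (b * d)) by ring.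
  by apply: coneD => //; apply: coneM => //; apply: cone_sqr.
case: (cone_total C (c * d)) => // CNcd.
have : c * d * (b * b) \in p.
  by apply/cone_suppP; split => //; rewrite -mulNr; apply: coneM => //; apply: cone_sqr.
by rewrite prime_idealrM [b * b \in p]prime_idealrM (negPf bp) /= orbF => /cone_suppP[].
Qed.

Lemma cone_pos_repr z a b : b \notin p -> z = res a / res b -> cone_pos z -> C (a * b).
Proof.
by move=> bp -> [c [d [dp cd Ccd]]]; apply: (cone_mul_residue_div dp bp _ Ccd).
Qed.

Lemma cone_pos_residue a : cone_pos (res a) <-> C a.
Proof.
have res_a : res a = res a / res 1 by rewrite rmorph1 divr1.
have one_notin : 1 \notin p by rewrite idealr1.
split; first by move/(cone_pos_repr one_notin res_a); rewrite mulr1.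
by move=> Ca; exists a, 1; rewrite mulr1.
Qed.

Lemma cone_pos0 : cone_pos 0.
Proof. by rewrite -(rmorph0 res); apply/cone_pos_residue/cone0. Qed.

Lemma cone_posD z w : cone_pos z -> cone_pos w -> cone_pos (z + w).
Proof.
move=> [a [b [bp -> Cab]]] [c [d [dp -> Ccd]]].
have [rb rd] : res b != 0 /\ res d != 0 by rewrite !residue_eq0.
exists (a * d + c * b), (b * d); split; first exact: prime_idealr_notinM.
  by rewrite rmorphD !rmorphM /= addf_div.
have -> : (a * d + c * b) * (b * d) = a * b * (d * d) + c * d * (b * b) by ring.
by apply: coneD; apply: coneM => //; apply: cone_sqr.
Qed.

Lemma cone_posM z w : cone_pos z -> cone_pos w -> cone_pos (z * w).
Proof.
move=> [a [b [bp -> Cab]]] [c [d [dp -> Ccd]]].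
exists (a * c), (b * d); split; first exact: prime_idealr_notinM.
  by rewrite !rmorphM /= mulf_div.
have -> : a * c * (b * d) = a * b * (c * d) by ring.
exact: coneM.
Qed.

Lemma cone_pos_total z : cone_pos z \/ cone_pos (- z).
Proof.
have [a [b [bp E]]] := residue_div_surj z.
case: (cone_total C (a * b)) => Cab; [left|right]; first by exists a, b.
by exists (- a), b; rewrite mulNr E rmorphN /= mulNr.
Qed.

Lemma cone_pos_anti z : cone_pos z -> cone_pos (- z) -> z = 0.
Proof.
have [a [b [bp E]]] := residue_div_surj z.
move=> /(cone_pos_repr bp E) Cab.
have ENz : - z = res (- a) / res b by rewrite E rmorphN /= mulNr.
move=> /(cone_pos_repr bp ENz); rewrite mulNr => CNab.
have : a * b \in p by apply/cone_suppP.
by rewrite prime_idealrM (negPf bp) orbF -residue_eq0 E => /eqP ->; rewrite mul0r.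
Qed.

Definition cone_le : rel (residue_field p) := fun x y => `[< cone_pos (y - x) >].

Lemma cone_le_ordering : field_ordering cone_le.
Proof.
rewrite /cone_le; split; [split|split].
- by move=> x; apply/asboolP; rewrite subrr; apply: cone_pos0.
- move=> x y /andP[/asboolP xy /asboolP yx]; apply/eqP; rewrite eq_sym -subr_eq0.
  by apply/eqP/cone_pos_anti; rewrite ?opprB.
- move=> y x z /asboolP xy /asboolP yz; apply/asboolP.
  by have := cone_posD yz xy; rewrite addrA subrK.
- move=> x y; apply/orP; case: (cone_pos_total (y - x)) => h; [left|right].
    exact/asboolP.
  by apply/asboolP; rewrite opprB in h.
- by move=> x y z /asboolP xy; apply/asboolP; rewrite opprD addrACA subrr addr0.
- move=> x y /asboolP + /asboolP; rewrite !subr0 => x0 y0; apply/asboolP.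
  exact: cone_posM.
Qed.

Definition cone_point : sper A := Sper cone_le_ordering.

Lemma cone_point_ge0 a : sper_ge0 cone_point a <-> C a.
Proof. by rewrite -cone_pos_residue /sper_ge0 /= /cone_le subr0; split => /asboolP. Qed.

End PrimeCone.

Section ZornChains.
Local Open Scope classical_set_scope.
Variable T : Type.

Lemma bigcup_chain2 (F : set (set T)) x y : total_on F subset ->
  (\bigcup_(X in F) X) x -> (\bigcup_(X in F) X) y -> exists2 X, F X & X x /\ X y.
Proof.
move=> Ftot [X FX Xx] [Y FY Yy].
case: (Ftot _ _ FX FY) => [XY|YX]; [exists Y|exists X] => //; split => //.
  exact: XY.
exact: YX.
Qed.

(* Adding [X0] to every set lets [Zorn_bigcup] cope with the empty chain. *)
Lemma Zorn_bigcup_nonempty (P : set (set T)) (X0 : set T) : P X0 ->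
  (forall F : set (set T), F `<=` P -> F !=set0 -> total_on F subset ->
     P (\bigcup_(X in F) X)) ->
  exists M, P M /\ forall Y, P Y -> M `<=` Y -> Y `<=` M.
Proof.
move=> PX0 Pchain.
have [|M [PM Mmax]] := Zorn_bigcup (P := fun B => P (B `|` X0)).
  move=> F FP Ftot; have [->|/set0P[X FX]] := eqVneq F set0.
    by rewrite bigcup_set0 set0U.
  rewrite -bigcupUl; last by exists X.
  rewrite -(bigcup_image _ (fun X => X `|` X0) id).
  apply: Pchain; first by move=> _ [Y FY <-]; apply: FP.
    by exists (X `|` X0), X.
  move=> _ _ [Y FY <-] [Z FZ <-].
  by case: (Ftot _ _ FY FZ) => YZ; [left|right]; apply: setSU.
exists (M `|` X0); split => // Y PY MY.
have YM : Y `<=` M.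
  apply: contrapT => nYM; apply: (Mmax Y).
    by split => // x Mx; apply: MY; left.
  by rewrite (proj2 (setUidPl Y X0)) // => x X0x; apply: MY; right.
by move=> y /YM; left.
Qed.

End ZornChains.

Section Preordering.
Local Open Scope classical_set_scope.
Variable A : comNzRingType.

Definition preordering (P : set A) : Prop :=
  [/\ forall x y, P x -> P y -> P (x + y),
      forall x y, P x -> P y -> P (x * y) &
      forall x, P (x * x)].

Definition adjoin (P : set A) (c : A) : set A :=
  fun z => exists p q, [/\ P p, P q & z = p + c * q].

Lemma preordering0 P : preordering P -> P 0.
Proof. by case=> _ _ Psqr; rewrite -(mulr0 0). Qed.

Lemma preordering1 P : preordering P -> P 1.
Proof. by case=> _ _ Psqr; rewrite -(mulr1 1). Qed.

Lemma preordering_adjoin P c : preordering P -> preordering (adjoin P c).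
Proof.
move=> Ppre; have [PD PM Psqr] := Ppre; split.
- move=> _ _ [p [q [Pp Pq ->]]] [p' [q' [Pp' Pq' ->]]].
  by exists (p + p'), (q + q'); split; [exact: PD|exact: PD|ring].
- move=> _ _ [p [q [Pp Pq ->]]] [p' [q' [Pp' Pq' ->]]].
  exists (p * p' + c * c * (q * q')), (p * q' + p' * q); split; last by ring.
    by apply: (PD); apply: (PM) => //; apply: (PM).
  by apply: (PD); apply: (PM).
- by move=> x; exists (x * x), 0; split; [|exact: preordering0|ring].
Qed.

Lemma sub_adjoin P c : preordering P -> P `<=` adjoin P c.
Proof. by move=> Ppre x Px; exists x, 0; split; [|exact: preordering0|ring]. Qed.

Lemma adjoin_mem P c : preordering P -> adjoin P c c.
Proof. by move=> Ppre; exists 0, 1; split; [exact: preordering0|exact: preordering1|ring]. Qed.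

Section MaximalPreordering.
Variable M : set A.
Hypotheses (M_pre : preordering M) (M_N1 : ~ M (-1)).
Hypothesis M_max : forall Y, preordering Y -> ~ Y (-1) -> M `<=` Y -> Y `<=` M.

Lemma max_preordering_adjoin c : ~ M c -> exists p q, [/\ M p, M q & -1 = p + c * q].
Proof.
move=> Mc; apply: contrapT => no_repr; apply: Mc.
apply: (M_max (preordering_adjoin c M_pre)); last exact: adjoin_mem.
  by move=> [p [q [Mp Mq E]]]; apply: no_repr; exists p, q.
exact: sub_adjoin.
Qed.

Lemma max_preordering_Nmul a b : ~ M (- a) -> ~ M (- b) -> ~ M (- (a * b)).
Proof.
move=> /max_preordering_adjoin[p1 [q1 [Mp1 Mq1 E1]]].
move=> /max_preordering_adjoin[p2 [q2 [Mp2 Mq2 E2]]] MNab.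
have [MD MM _] := M_pre; apply: M_N1.
have p1E : p1 = -1 + a * q1 by rewrite E1; ring.
have p2E : p2 = -1 + b * q2 by rewrite E2; ring.
(* expand [(1 + p1) (1 + p2) = (a q1) (b q2)] *)
have -> : -1 = p1 + p2 + p1 * p2 + - (a * b) * (q1 * q2) by rewrite p1E p2E; ring.
by apply: (MD); [apply: (MD); [apply: (MD)|apply: (MM)]|apply: (MM) => //; apply: (MM)].
Qed.

Lemma max_preordering_total x : M x \/ M (- x).
Proof.
apply: contrapT => /not_or_and[Mx MNx].
apply: (@max_preordering_Nmul x (- x)); rewrite ?opprK // mulrN opprK.
by case: M_pre.
Qed.

Lemma max_preordering_cone : exists C : prime_cone A, M = C.
Proof.
have [MD MM _] := M_pre.
suff Mprime : forall x y, M (x * y) -> M (- (x * y)) ->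
    (M x /\ M (- x)) \/ (M y /\ M (- y)).
  by exists (PrimeCone MD MM max_preordering_total M_N1 Mprime).
move=> x y Mxy MNxy; apply: contrapT => /not_or_and[nx ny].
have sign z : ~ (M z /\ M (- z)) -> exists2 z', ~ M (- z') & z' = z \/ z' = - z.
  move=> nz; case: (max_preordering_total z) => Mz.
    by exists z; [move=> MNz; apply: nz|left].
  by exists (- z); [rewrite opprK => Mz'; apply: nz|right].
have [x' NMx' x'E] := sign x nx; have [y' NMy' y'E] := sign y ny.
apply: (max_preordering_Nmul NMx' NMy').
by case: x'E => ->; case: y'E => ->; rewrite ?mulNr ?mulrN ?opprK.
Qed.

End MaximalPreordering.

Lemma preordering_sub_cone P : preordering P -> ~ P (-1) ->
  exists C : prime_cone A, P `<=` C.
Proof.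
move=> Ppre PN1.
pose Phi Y := [/\ preordering Y, ~ Y (-1) & P `<=` Y].
case: (@Zorn_bigcup_nonempty _ Phi P) => [|F FPhi [X0 FX0] Ftot|M [[M_pre MN1 PM] M_max]].
- by split.
- split.
  + split.
    * move=> x y Fx Fy; have [X FX [Xx Xy]] := bigcup_chain2 Ftot Fx Fy.
      by exists X => //; have [[XD _ _] _ _] := FPhi _ FX; apply: XD.
    * move=> x y Fx Fy; have [X FX [Xx Xy]] := bigcup_chain2 Ftot Fx Fy.
      by exists X => //; have [[_ XM _] _ _] := FPhi _ FX; apply: XM.
    * by move=> x; exists X0 => //; have [[_ _ Xsqr] _ _] := FPhi _ FX0.
  + by move=> [X FX XN1]; have [_ nXN1 _] := FPhi _ FX; apply: nXN1.
  + by move=> x Px; exists X0 => //; have [_ _ PX] := FPhi _ FX0; apply: PX.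
have [|C MC] := @max_preordering_cone M M_pre MN1.
  by move=> Y Y_pre YN1 MY; apply: M_max => //; split => //; apply: subset_trans MY.
by exists C; rewrite -MC.
Qed.

End Preordering.

Section MaximalIdeals.
Local Open Scope classical_set_scope.
Variable A : comNzRingType.

Lemma maximal_ideal_sub (I : set A) : I 0 -> ~ I 1 ->
    (forall a x y, I x -> I y -> I (a * x + y)) ->
  exists m : {pred A}, maximal_ideal m /\ forall x, I x -> x \in m.
Proof.
move=> I0 IN1 Ilin.
pose Phi J := [/\ J 0, ~ J 1, forall a x y, J x -> J y -> J (a * x + y) & I `<=` J].
case: (@Zorn_bigcup_nonempty _ Phi I) => [|F FPhi [X0 FX0] Ftot|M [[M0 MN1 Mlin IM] M_max]].
- by split.
- split.
  + by exists X0 => //; have [] := FPhi _ FX0.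
  + by move=> [X FX X1]; have [_ XN1 _ _] := FPhi _ FX; apply: XN1.
  + move=> a x y Fx Fy; have [X FX [Xx Xy]] := bigcup_chain2 Ftot Fx Fy.
    by exists X => //; have [_ _ Xlin _] := FPhi _ FX; apply: Xlin.
  + by move=> x Ix; exists X0 => //; have [_ _ _ IX] := FPhi _ FX0; apply: IX.
pose m : {pred A} := fun x => `[< M x >].
have mE x : x \in m = `[< M x >] by [].
exists m; split; last by move=> x /IM Mx; rewrite mE; apply/asboolP.
split.
  split; rewrite ?mE.
  - exact/asboolP.
  - exact/asboolPn.
  - by move=> a x y; rewrite !mE => /asboolP Mx /asboolP My; apply/asboolP; apply: Mlin.
move=> J [J0 JN1 Jlin] mJ x.
have JM : [set t | t \in J] `<=` M.
  apply: M_max; last by move=> t Mt; apply: mJ; rewrite mE; apply/asboolP.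
  split => //; first exact/negP.
  by move=> t /IM Mt; apply: mJ; rewrite mE; apply/asboolP.
by rewrite mE; apply/idP/asboolP => [/JM|Mx] //; apply: mJ; rewrite mE; apply/asboolP.
Qed.

Lemma partition_of_unity (P : set A) :
    (forall m : {pred A}, maximal_ideal m -> exists s, s \notin m /\ P s) ->
  exists l : seq (A * A),
    (forall st, st \in l -> P st.2) /\ \sum_(st <- l) st.1 * st.2 = 1.
Proof.
move=> Plocal.
pose I x := exists l : seq (A * A),
  (forall st, st \in l -> P st.2) /\ \sum_(st <- l) st.1 * st.2 = x.
apply: contrapT => IN1; rewrite -/(I 1) in IN1.
have I0 : I 0 by exists [::]; rewrite big_nil.
have Ilin a x y : I x -> I y -> I (a * x + y).
  move=> [lx [Plx <-]] [ly [Ply <-]].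
  exists ([seq (a * st.1, st.2) | st <- lx] ++ ly); split.
    by move=> st; rewrite mem_cat => /orP[/mapP[st' /Plx Pst' ->]|/Ply].
  rewrite big_cat big_map mulr_sumr; congr (_ + _).
  by apply: eq_bigr => st _; rewrite mulrA.
have [m [max_m Im]] := maximal_ideal_sub I0 IN1 Ilin.
have [s [sm Ps]] := Plocal m max_m.
apply: (negP sm); apply: Im.
by exists [:: (1, s)]; rewrite big_seq1 mul1r; split => // st; rewrite inE => /eqP ->.
Qed.

End MaximalIdeals.

Section RingIdentities.
Variable A : comNzRingType.

Lemma eq_of_subr_mul0 (X Y Z W : A) : Z = 0 -> X - Y = Z * W -> X = Y.
Proof. by move=> -> /eqP; rewrite mul0r subr_eq0 => /eqP. Qed.

Lemma mulr_subr1_geom (y : A) K : (1 - y) * \sum_(i < K) y ^+ i = 1 - y ^+ K.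
Proof. by rewrite -opprB mulNr -subrX1 opprB. Qed.

Lemma bernstein_index_shift (x z : A) d (h : nat -> A) :
  \sum_(i < d.+2) ('C(d.+1, i) * i)%:R * h i * (x ^+ i * z ^+ (d.+1 - i)) =
  d.+1%:R * x * \sum_(i < d.+1) 'C(d, i)%:R * h i.+1 * (x ^+ i * z ^+ (d - i)).
Proof.
rewrite big_ord_recl /= muln0 !mul0r add0r mulr_sumr.
apply: eq_bigr => i _ /=.
rewrite (_ : ('C(d.+1, i.+1) * i.+1)%N = (d.+1 * 'C(d, i))%N); last first.
  by rewrite mulnC -mul_bin_diag.
by rewrite natrM subSS exprS; ring.
Qed.

Lemma bernstein_sum (y : A) d :
  \sum_(i < d.+1) 'C(d, i)%:R * (y ^+ i * (1 - y) ^+ (d - i)) = 1.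
Proof.
have := exprDn (1 - y) y d; rewrite subrK expr1n => binomial.
by rewrite [in RHS]binomial; apply: eq_bigr => i _; rewrite -mulr_natl; ring.
Qed.

Lemma bernstein_mean (y : A) d :
  \sum_(i < d.+1) ('C(d, i) * i)%:R * (y ^+ i * (1 - y) ^+ (d - i)) = d%:R * y.
Proof.
case: d => [|d]; first by rewrite big_ord1 muln0 !mul0r.
have := bernstein_index_shift y (1 - y) d (fun _ => 1).
under eq_bigr do rewrite mulr1.
under [X in _ = _ * X]eq_bigr do rewrite mulr1.
by rewrite bernstein_sum mulr1.
Qed.

Lemma bernstein_second_moment (y : A) d :
  \sum_(i < d.+1) ('C(d, i) * i)%:R * i%:R * (y ^+ i * (1 - y) ^+ (d - i))
   = d%:R * d.-1%:R * y ^+ 2 + d%:R * y.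
Proof.
case: d => [|d]; first by rewrite big_ord1 muln0 !mul0r add0r.
rewrite (bernstein_index_shift y (1 - y) d (fun i => i%:R)).
under eq_bigr do rewrite -natr1 mulrDr mulr1 mulrDl -natrM.
by rewrite big_split /= bernstein_mean bernstein_sum /=; ring.
Qed.

Lemma bernstein_variance (y r v : A) d : d%:R * v = 1 ->
  \sum_(i < d.+1) 'C(d, i)%:R * (i%:R * v - r) ^+ 2 * (y ^+ i * (1 - y) ^+ (d - i))
   = (y - r) ^+ 2 + v * (y * (1 - y)).
Proof.
move=> dv1.
have -> : \sum_(i < d.+1) 'C(d, i)%:R * (i%:R * v - r) ^+ 2 * (y ^+ i * (1 - y) ^+ (d - i))
  = v ^+ 2 * (\sum_(i < d.+1) ('C(d, i) * i)%:R * i%:R * (y ^+ i * (1 - y) ^+ (d - i)))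
    - 2%:R * v * r * (\sum_(i < d.+1) ('C(d, i) * i)%:R * (y ^+ i * (1 - y) ^+ (d - i)))
    + r ^+ 2 * (\sum_(i < d.+1) 'C(d, i)%:R * (y ^+ i * (1 - y) ^+ (d - i))).
  rewrite !mulr_sumr -sumrB -big_split /=.
  by apply: eq_bigr => i _; rewrite natrM; ring.
rewrite bernstein_second_moment bernstein_mean bernstein_sum.
case: d dv1 => [|d] dv1; first by move: (oner_neq0 A); rewrite -dv1 mul0r eqxx.
apply: (eq_of_subr_mul0 (Z := d.+1%:R * v - 1)
  (W := y ^+ 2 * (d.+1%:R * v + 1) - v * y ^+ 2 + v * y - 2%:R * r * y)).
  by rewrite dv1 subrr.
by rewrite /= -natr1; ring.
Qed.

End RingIdentities.

Section NatBounds.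
Local Open Scope nat_scope.

Lemma bernoulli_expn a K : a ^ K * (a + K) <= a * (a + 1) ^ K.
Proof.
elim: K => [|K IHK]; first by rewrite !expn0 mul1n muln1 addn0.
have aK : a ^ K <= (a + 1) ^ K by case: K {IHK} => // K; rewrite leq_exp2r ?leq_addr.
rewrite !expnS; nia.
Qed.

Lemma leq_mul_expn a c K : 1 <= a -> a * c <= K -> c * a ^ K <= (a + 1) ^ K.
Proof. by move=> a_ge1 acK; have := bernoulli_expn a K; nia. Qed.

End NatBounds.

Section ArchimedeanSemiring.
Variables (A : comNzRingType) (T : {pred A}).
Hypotheses (T_semiring : is_semiring T) (T_archi : archimedean_semiring T).
Variables (n : nat) (u : A).
Hypotheses (n_gt1 : (1 < n)%N) (uT : u \in T) (nu1 : n%:R * u = 1).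

HB.instance Definition _ := GRing.isSemiringClosed.Build A T T_semiring.

Lemma natXuX e : (n ^ e)%N%:R * u ^+ e = 1.
Proof. by rewrite natrX -exprMn nu1 expr1n. Qed.

Lemma eq_modulo_natXuX k (X Y W : A) :
  X - Y = ((n ^ k)%N%:R * u ^+ k - 1) * W -> X = Y.
Proof. by apply: eq_of_subr_mul0; rewrite natXuX subrr. Qed.

Lemma uX_natXuX i j : u ^+ i = (n ^ j)%N%:R * u ^+ (i + j).
Proof. by rewrite exprD mulrCA natXuX mulr1. Qed.

Lemma nat_uX_subr_mem a b i j : (i <= j)%N -> (b <= a * n ^ (j - i))%N ->
  a%:R * u ^+ i - b%:R * u ^+ j \in T.
Proof.
move=> ij b_le.
rewrite (uX_natXuX i (j - i)) subnKC // mulrA -natrM -mulrBl -natrB //.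
by rewrite rpredM ?rpred_nat ?rpredX.
Qed.

Lemma uX_subr_mem b i j : (i <= j)%N -> (b <= n ^ (j - i))%N ->
  u ^+ i - b%:R * u ^+ j \in T.
Proof. by move=> ij; have := @nat_uX_subr_mem 1 b i j ij; rewrite mul1r mul1n. Qed.

Lemma uX_sub2_mem e : u ^+ e - 2%:R * u ^+ e.+1 \in T.
Proof. by apply: uX_subr_mem => //; rewrite subSnn expn1. Qed.

Lemma nat_uX_sqr_mem a b i j : (a%:R * u ^+ i - b%:R * u ^+ j) ^+ 2 \in T.
Proof.
rewrite (uX_natXuX i j) (uX_natXuX j i) addnC !mulrA -!natrM -mulrBl exprMn.
have natsqrT (x y : nat) : (x%:R - y%:R : A) ^+ 2 \in T.
  case: (leqP y x) => [yx|/ltnW xy]; last rewrite -sqrrN opprB.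
    by rewrite -natrB // rpredX ?rpred_nat.
  by rewrite -natrB // rpredX ?rpred_nat.
by rewrite rpredM ?natsqrT ?rpredX.
Qed.

Lemma archi_nat f : exists N : nat, N%:R + f \in T.
Proof.
have [[N|N] NfT] := T_archi f; first by exists N.
exists 0%N; rewrite add0r.
have -> : f = (Negz N)%:~R + f + N.+1%:R by rewrite NegzE mulrNz pmulrn; ring.
by rewrite rpredD ?rpred_nat.
Qed.

Lemma archi_nat_seq (s : seq A) : exists N : nat, forall x, x \in s -> N%:R + x \in T.
Proof.
elim: s => [|x s [N Ns]]; first by exists 0%N.
have [M MxT] := archi_nat x; exists (N + M)%N => y; rewrite inE => /orP[/eqP ->|ys].
  by rewrite natrD -addrA rpredD ?rpred_nat.
by rewrite natrD addrAC rpredD ?rpred_nat ?Ns.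
Qed.

Lemma archi_expn f : exists k, (n ^ k)%N%:R + f \in T.
Proof.
have [N NfT] := archi_nat f; exists N.
have NnN : (N <= n ^ N)%N by apply/ltnW/ltn_expl.
by rewrite -(subnKC NnN) natrD addrAC rpredD ?rpred_nat.
Qed.

(* The variance identity for the Bernstein basis of degree [d = n^e] expresses
   [(y - r)^2 + u^e] with squares and coefficients in [T]. *)
Lemma sqr_sub_uX_mem y a k e : y \in T -> 1 - y \in T ->
  (y - a%:R * u ^+ k) ^+ 2 + u ^+ e \in T.
Proof.
move=> yT y1T; set d := (n ^ e)%N.
have -> : (y - a%:R * u ^+ k) ^+ 2 + u ^+ e =
    \sum_(i < d.+1) 'C(d, i)%:R * (i%:R * u ^+ e - a%:R * u ^+ k) ^+ 2
      * (y ^+ i * (1 - y) ^+ (d - i))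
    + u ^+ e * ((1 - y) + y * y).
  by rewrite bernstein_variance ?natXuX //; ring.
have restT : u ^+ e * ((1 - y) + y * y) \in T by rewrite rpredM ?rpredX // rpredD ?rpredM.
have termT (i : 'I_d.+1) : 'C(d, i)%:R * (i%:R * u ^+ e - a%:R * u ^+ k) ^+ 2
    * (y ^+ i * (1 - y) ^+ (d - i)) \in T.
  apply: rpredM; last by rewrite rpredM ?rpredX.
  by apply: rpredM; [exact: rpred_nat|exact: nat_uX_sqr_mem].
by rewrite rpredD // rpred_sum // => i _; apply: termT.
Qed.

Definition Tbar : {pred A} := fun x => `[< forall e, x + u ^+ e \in T >].

Lemma TbarP x : reflect (forall e, x + u ^+ e \in T) (x \in Tbar).
Proof. exact: asboolP. Qed.

Lemma mem_Tbar x : x \in T -> x \in Tbar.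
Proof. by move=> xT; apply/TbarP => e; rewrite rpredD ?rpredX. Qed.

Lemma uX_Tbar e : u ^+ e \in Tbar.
Proof. by rewrite mem_Tbar ?rpredX. Qed.

Lemma Tbar_subuX x e : x - u ^+ e \in Tbar -> x \in T.
Proof. by move/TbarP/(_ e); rewrite subrK. Qed.

Lemma TbarD : {in Tbar &, forall x y, x + y \in Tbar}.
Proof.
move=> x y /TbarP xT /TbarP yT; apply/TbarP => e.
have -> : x + y + u ^+ e =
    (x + u ^+ e.+1) + (y + u ^+ e.+1) + (u ^+ e - 2%:R * u ^+ e.+1).
  by rewrite mulr2n mulrDl mul1r; ring.
by rewrite rpredD ?uX_sub2_mem // rpredD ?xT ?yT.
Qed.

Lemma TbarM : {in Tbar &, forall x y, x * y \in Tbar}.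
Proof.
move=> x y /TbarP xT /TbarP yT; apply/TbarP => e.
have [m mT] := archi_expn (- (x + y)).
set p := (e.+1 + m)%N.
have upE : (n ^ m)%N%:R * u ^+ p = u ^+ e.+1 by rewrite /p addnC exprD mulrA natXuX mul1r.
have -> : x * y + u ^+ e = (x + u ^+ p) * (y + u ^+ p) + u ^+ p * ((n ^ m)%N%:R - (x + y))
    + (u ^+ e - 2%:R * u ^+ e.+1) + (u ^+ e.+1 - 1%:R * u ^+ (p + p)).
  by rewrite exprD -upE; ring.
apply: rpredD; last by apply: uX_subr_mem; [rewrite /p; lia|rewrite expn_gt0 ltnW].
apply: rpredD; last exact: uX_sub2_mem.
by apply: rpredD; apply: rpredM; rewrite ?xT ?yT ?rpredX.
Qed.

Lemma Tbar_semiring : semiring_closed Tbar.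
Proof.
by split; split; rewrite ?mem_Tbar ?rpred0 ?rpred1 //; [exact: TbarD|exact: TbarM].
Qed.

HB.instance Definition _ := GRing.isSemiringClosed.Build A Tbar Tbar_semiring.

Lemma Tbar_sqr b : b * b \in Tbar.
Proof.
apply/TbarP => e.
have [N NbT] := archi_nat_seq [:: b; - b].
have [k /ltnW Nk] : exists k, (2 * N < n ^ k)%N by exists (2 * N)%N; apply: ltn_expl.
pose y := u ^+ k * (N%:R + b).
have yT : y \in T by rewrite rpredM ?rpredX ?NbT ?mem_head.
have y1T : 1 - y \in T.
  have -> : 1 - y = u ^+ k * ((n ^ k - 2 * N)%N%:R + (N%:R - b)).
    by apply: (eq_modulo_natXuX (k := k) (W := -1)); rewrite natrB // natrM /y; ring.
  by rewrite rpredM ?rpredX // rpredD ?rpred_nat // NbT // !inE eqxx orbT.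
have -> : b * b + u ^+ e =
    (n ^ k * n ^ k)%N%:R * ((y - N%:R * u ^+ k) ^+ 2 + u ^+ (e + k + k)).
  apply: (eq_modulo_natXuX (k := k) (W := - (1 + (n ^ k)%N%:R * u ^+ k) * (b * b + u ^+ e))).
  by rewrite /y natrM !exprD; ring.
by rewrite rpredM ?rpred_nat ?sqr_sub_uX_mem.
Qed.

Lemma Tbar_sub_uX_le x i j : (i <= j)%N -> x - u ^+ i \in Tbar -> x - u ^+ j \in Tbar.
Proof.
move=> ij xiT; have -> : x - u ^+ j = (x - u ^+ i) + (u ^+ i - 1%:R * u ^+ j) by ring.
by rewrite rpredD // mem_Tbar // uX_subr_mem // expn_gt0 ltnW.
Qed.

Lemma one_sub_uX m : 1 - u ^+ m = (n ^ m - 1)%N%:R * u ^+ m.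
Proof. by rewrite natrB ?expn_gt0 ?(ltnW n_gt1) // mulrBl natXuX mul1r. Qed.

Lemma uX_sub_geom_mem B j m : (0 < m)%N ->
  exists K0, forall K, (K0 <= K)%N -> u ^+ j - B%:R * (1 - u ^+ m) ^+ K \in T.
Proof.
move=> m_gt0; set a := (n ^ m - 1)%N.
have a_ge1 : (1 <= a)%N.
  have : (n ^ 1 <= n ^ m)%N by rewrite leq_exp2l.
  by rewrite /a expn1; lia.
have a1E : (a + 1 = n ^ m)%N by rewrite /a subnK // expn_gt0 ltnW.
exists (a * (B * n ^ j) + j)%N => K K0K.
rewrite one_sub_uX exprMn -natrX -exprM mulrA -natrM.
have jmK : (j <= m * K)%N by nia.
apply: uX_subr_mem => //; rewrite -/a.
have := leq_mul_expn a_ge1 (leq_trans (leq_addr j _) K0K).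
by rewrite a1E -expnM -(subnK jmK) addnK expnD mulnAC leq_pmul2r // expn_gt0 (ltnW n_gt1).
Qed.

Lemma Tbar_subrX y z K : y \in Tbar -> z \in Tbar -> z - y \in Tbar ->
  z ^+ K - y ^+ K \in Tbar.
Proof.
move=> yT zT zyT; rewrite subrXX rpredM // rpred_sum // => i _.
by rewrite rpredM ?rpredX.
Qed.

Lemma Tbar_geom_small y m B j : (0 < m)%N -> y \in Tbar -> (1 - u ^+ m) - y \in Tbar ->
  exists K0, forall K, (K0 <= K)%N -> u ^+ j - B%:R * y ^+ K \in Tbar.
Proof.
move=> m_gt0 yT gapT; have [K0 K0P] := uX_sub_geom_mem B j m_gt0.
exists K0 => K /K0P geomT.
have -> : u ^+ j - B%:R * y ^+ K =
    (u ^+ j - B%:R * (1 - u ^+ m) ^+ K) + B%:R * ((1 - u ^+ m) ^+ K - y ^+ K) by ring.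
apply: rpredD; first exact: mem_Tbar.
by rewrite rpredM ?rpred_nat ?Tbar_subrX // mem_Tbar // one_sub_uX rpredM ?rpred_nat ?rpredX.
Qed.

(* [w \sum_i y^i] dominates [u^j] while the tail [a y^(K+1)] is eventually below [u^(j+1)]. *)
Lemma Tbar_geom_combination y m M j : (0 < m)%N ->
    y \in Tbar -> (1 - u ^+ m) - y \in Tbar ->
  exists K, forall w a, w - u ^+ j \in Tbar -> a + M%:R \in Tbar ->
    w * (\sum_(i < K.+1) y ^+ i) + a * y ^+ K.+1 - u ^+ j.+1 \in Tbar.
Proof.
move=> m_gt0 yT gapT.
have [K KP] := Tbar_geom_small M j.+1 m_gt0 yT gapT.
exists K => w a wT aT; rewrite big_ord_recl expr0.
set S := \sum_(i < K) _.
have ST : S \in Tbar by rewrite rpred_sum // => i _; rewrite rpredX.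
have -> : w * (1 + S) + a * y ^+ K.+1 - u ^+ j.+1 =
    (w - u ^+ j) * (1 + S) + u ^+ j * S + (a + M%:R) * y ^+ K.+1
    + (u ^+ j.+1 - M%:R * y ^+ K.+1) + (u ^+ j - 2%:R * u ^+ j.+1) by ring.
apply: rpredD; last exact/mem_Tbar/uX_sub2_mem.
apply: rpredD; last exact: KP.
by rewrite !rpredD ?rpredM ?uX_Tbar ?rpredX // rpredD ?rpred1.
Qed.

Lemma Tbar_strict_of_mul a q j : q \in Tbar -> a * q - u ^+ j \in Tbar ->
  exists e, a - u ^+ e \in Tbar.
Proof.
move=> qT aqT.
have [k kT] := archi_expn (- q).
have [l lT] := archi_expn (- a).
have [L LT] := archi_expn a.
pose q' := u ^+ k * q; pose y := 1 - q'.
have q'T : q' \in Tbar by rewrite rpredM ?uX_Tbar.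
have yT : y \in Tbar.
  apply: mem_Tbar; have -> : y = u ^+ k * ((n ^ k)%N%:R - q).
    by rewrite /y /q' mulrBr [u ^+ k * _%:R]mulrC natXuX.
  by rewrite rpredM ?rpredX.
have aq'T : a * q' - u ^+ (j + k) \in Tbar.
  have -> : a * q' - u ^+ (j + k) = u ^+ k * (a * q - u ^+ j) by rewrite /q' exprD; ring.
  by rewrite rpredM ?uX_Tbar.
have q'gapT : q' - u ^+ (j + k + l) \in Tbar.
  have -> : q' - u ^+ (j + k + l) =
      u ^+ l * ((n ^ l)%N%:R - a) * q' + u ^+ l * (a * q' - u ^+ (j + k)).
    by apply: (eq_modulo_natXuX (k := l) (W := - q')); rewrite !exprD; ring.
  by rewrite rpredD ?rpredM ?uX_Tbar ?(mem_Tbar lT).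
have gapT : (1 - u ^+ (j + k + l).+1) - y \in Tbar.
  have -> : (1 - u ^+ (j + k + l).+1) - y = q' - u ^+ (j + k + l).+1 by rewrite /y; ring.
  exact: Tbar_sub_uX_le q'gapT.
have [K KP] := Tbar_geom_combination (n ^ L) (j + k) (ltn0Sn _) yT gapT.
exists (j + k).+1.
have := KP (a * q') a aq'T; rewrite addrC => /(_ (mem_Tbar LT)).
have -> : a * q' * (\sum_(i < K.+1) y ^+ i) + a * y ^+ K.+1 =
    a * ((1 - y) * (\sum_(i < K.+1) y ^+ i) + y ^+ K.+1) by rewrite /y; ring.
by rewrite mulr_subr1_geom subrK mulr1.
Qed.

Lemma Tbar_strict_sum (l : seq (A * A)) :
    (forall st, st \in l -> nonneg_on_XA T st.2) -> \sum_(st <- l) st.1 * st.2 = 1 ->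
  exists e, \sum_(st <- l) st.2 - u ^+ e \in Tbar.
Proof.
move=> l_nonneg l_unit; set g := \sum_(st <- l) st.2.
have Tbar_pre : preordering (fun x => x \in Tbar).
  by split=> [x y|x y|x]; [exact: rpredD|exact: rpredM|exact: Tbar_sqr].
case: (classic (adjoin (fun x => x \in Tbar) (- g) (-1))) => [[p [q [pT qT N1E]]]|N1_notin].
  apply: (@Tbar_strict_of_mul _ q 0 qT).
  by have -> : g * q - u ^+ 0 = p by rewrite expr0 N1E; ring.
have [C adjC] := preordering_sub_cone (preordering_adjoin (- g) Tbar_pre) N1_notin.
have TC a : a \in T -> C a by move=> aT; apply/adjC/sub_adjoin/mem_Tbar.
have sC : {in l, forall st, C st.2}.
  move=> st st_l; apply/cone_point_ge0.
  by apply: (l_nonneg st st_l) => a /TC /cone_point_ge0.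
have l_supp := cone_sum_supp sC (adjC _ (adjoin_mem _ Tbar_pre)).
have : 1 \in cone_supp C.
  by rewrite -l_unit big_seq rpred_sum // => st /l_supp; apply: idealMr.
by move=> /cone_suppP[_] /cone_N1.
Qed.

Lemma T_unit_combination (l : seq (A * A)) e :
    \sum_(st <- l) st.1 * st.2 = 1 -> \sum_(st <- l) st.2 - u ^+ e \in Tbar ->
  exists t : A * A -> A,
    {in l, forall st, t st \in T} /\ \sum_(st <- l) t st * st.2 = 1.
Proof.
move=> l_unit; set g := \sum_(st <- l) st.2 => gT.
have [k kT] := archi_expn (- g).
pose c := u ^+ k; pose y := 1 - c * g.
have yT : y \in Tbar.
  apply: mem_Tbar; have -> : y = u ^+ k * ((n ^ k)%N%:R - g).
    by rewrite /y /c mulrBr [u ^+ k * _%:R]mulrC natXuX.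
  by rewrite rpredM ?rpredX.
have gapT : (1 - u ^+ (k + e).+1) - y \in Tbar.
  have -> : (1 - u ^+ (k + e).+1) - y = c * g - u ^+ (k + e).+1 by rewrite /y; ring.
  apply: (@Tbar_sub_uX_le _ (k + e)) => //.
  have -> : c * g - u ^+ (k + e) = c * (g - u ^+ e) by rewrite /c exprD; ring.
  by rewrite rpredM ?uX_Tbar.
have [B BT] := archi_nat_seq [seq st.1 | st <- l].
have [K KP] := Tbar_geom_combination B k (ltn0Sn _) yT gapT.
exists (fun st => c * (\sum_(i < K.+1) y ^+ i) + st.1 * y ^+ K.+1); split.
  move=> st st_l; apply: (@Tbar_subuX _ k.+1); apply: KP.
    by rewrite /c subrr rpred0.
  by rewrite addrC mem_Tbar // BT // map_f.
under eq_bigr do rewrite mulrDl [_ * y ^+ _ * _]mulrAC.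
rewrite big_split /= -mulr_sumr -mulr_suml l_unit mul1r -/g.
have -> : c * (\sum_(i < K.+1) y ^+ i) * g = (1 - y) * \sum_(i < K.+1) y ^+ i.
  by rewrite /y; ring.
by rewrite mulr_subr1_geom subrK.
Qed.

Lemma mem_T_of_local f :
    (forall m : {pred A}, maximal_ideal m ->
      exists s, s \notin m /\ nonneg_on_XA T s /\ s * f \in T) ->
  f \in T.
Proof.
move=> f_local.
have [l [l_good l_unit]] :=
  partition_of_unity (P := fun s => nonneg_on_XA T s /\ s * f \in T) f_local.
have [e gT] := Tbar_strict_sum (fun st st_l => (l_good st st_l).1) l_unit.
have [t [tT t_unit]] := T_unit_combination l_unit gT.
rewrite -[f]mul1r -t_unit mulr_suml big_seq rpred_sum // => st st_l.
by rewrite -mulrA rpredM ?tT // (l_good st st_l).2.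
Qed.

End ArchimedeanSemiring.

Theorem theorem4p2 (A : comNzRingType) (T : {pred A}) (f : A)
  (hT : is_semiring T) (harch : archimedean_semiring T)
  (hinv : exists n : nat, (1 < n)%N /\ exists u : A, u \in T /\ n%:R * u = 1)
  (hloc : forall m : {pred A}, maximal_ideal m ->
     exists s : A, s \notin m /\ nonneg_on_XA T s /\ s * f \in T) :
  f \in T.
Proof.
have [n [n_gt1 [u [uT nu1]]]] := hinv.
exact: (mem_T_of_local hT harch n_gt1 uT nu1 hloc).
Qed.
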